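(* Let $\Delta \subset \mathbb{R}^2$ be a compact connected domain with connected piecewise-linear boundary, let $\chi$ be a finite set of nodes in $\Delta$ containing the fence nodes $\chi_f$, and let $\chi_{int} = \chi \setminus \chi_f$. Let $\mathcal{R}$ be the Rips complex of $\chi$ with parameter $r_b>0$ and $\mathcal{F} \subseteq \mathcal{R}$ the fence subcomplex. Let $X_v$, $v \in \chi_{int}$, be independent random variables giving the failure time of node $v$, and assume that $(\mathcal{R},\mathcal{F})$ passes the de Silva–Ghrist criterion (i.e., $\emptyset$ is not a death set). Let $A_1, \dots, A_k$ be all the minimal death sets, and for $A \subseteq \chi_{int}$ put $S_A = \max_{v \in A} X_v$. Then for every $t$, $$\mathbb{P}(\text{failure by time } t) = \mathbb{P}\left( \min_{1 \le i \le k} S_{A_i} \le t \right),$$ where ''failure by time $t$'' is the event that the set $\{v \in \chi_{int} : X_v \le t\}$ of nodes failed by time $t$ is a death set.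
   Context: Setting: the fence nodes $\chi_f$ are the vertices of the piecewise-linear boundary $\partial\Delta$, cyclically ordered, with cyclically consecutive fence nodes at distance less than $r_b$. The Rips complex $\mathcal{R}$ has a simplex for every nonempty subset of $\chi$ whose points are pairwise at distance $< r_b$. The fence $\mathcal{F}$ is the subcomplex consisting of the fence nodes and the edges joining cyclically consecutive fence nodes (a cycle homeomorphic to $S^1$). For $B \subseteq \chi_{int}$, $\mathcal{R}_B$ denotes the maximal subcomplex of $\mathcal{R}$ with vertex set $\chi \setminus B$ (the simplices containing no vertex of $B$). Homology is with $\mathbb{Z}_2$ coefficients. A class in $H_2(\mathcal{R}_B,\mathcal{F})$ is fundamental if its image under the connecting homomorphism $H_2(\mathcal{R}_B,\mathcal{F}) \to H_1(\mathcal{F})$ is nonzero; $(\mathcal{R}_B,\mathcal{F})$ passes the de Silva–Ghrist criterion if such a class exists. A set $B \subseteq \chi_{int}$ is a death set if $(\mathcal{R}_B,\mathcal{F})$ does not pass the criterion, and a minimal death set if moreover no proper subset of $B$ is a death set. *)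

From HB Require Import structures.
From mathcomp Require Import all_boot all_order all_algebra.
From mathcomp Require Import all_classical all_reals all_analysis.
Set Implicit Arguments. Unset Strict Implicit. Unset Printing Implicit Defensive.
Import Order.TTheory GRing.Theory Num.Theory numFieldNormedType.Exports.
Local Open Scope classical_set_scope.
Local Open Scope ring_scope.

Definition euclid_dist (R : realType) (a b : R * R) : R :=
  Num.sqrt ((a.1 - b.1) ^+ 2 + (a.2 - b.2) ^+ 2).

Definition closed_segment (R : realType) (a b : R * R) : set (R * R) :=
  [set x | exists s : R, [/\ 0 <= s, s <= 1 &
     x = ((1 - s) * a.1 + s * b.1, (1 - s) * a.2 + s * b.2)]].

Definition topo_boundary (T : topologicalType) (A : set T) : set T :=
  closure A `\` interior A.

(** Simplicial complexes on a finite vertex type V are given as sets of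
    simplices, each simplex being a (nonempty) finite set of vertices. *)
Local Close Scope classical_set_scope.
Local Open Scope set_scope.

Section Complexes.
Variable V : finType.

Definition rips (R : realType) (pos : V -> R * R) (rb : R) : {set {set V}} :=
  [set s : {set V} | (0 < #|s|)%N &&
     [forall x in s, forall y in s, euclid_dist (pos x) (pos y) < rb]].

Definition restrict (K : {set {set V}}) (B : {set V}) : {set {set V}} :=
  [set s in K | [disjoint s & B]].

Definition fence_cx (m : nat) (f : 'I_m -> V) : {set {set V}} :=
  [set [set f i] | i : 'I_m] :|: [set [set f i; f (ordS i)] | i : 'I_m].

Definition simplices (K : {set {set V}}) (n : nat) : {set {set V}} :=
  [set s in K | #|s| == n.+1].

(** Z_2 chains are sets of simplices (addition = symmetric difference).
    Boundary: a face appears iff it is a codimension-1 face of an odd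
    number of simplices of the chain. *)
Definition bdry (c : {set {set V}}) : {set {set V}} :=
  [set t : {set V} | (0 < #|t|)%N &&
     odd #|[set s in c | (t \subset s) && (#|s :\: t| == 1%N)]|].

Definition boundaries1 (K : {set {set V}}) : {set {set {set V}}} :=
  [set bdry d | d in finset.powerset (simplices K 2)].

(** (K, L) passes the de Silva--Ghrist criterion: there is a class in
    H_2(K, L) (represented by a relative 2-cycle c: a 2-chain of K with
    boundary in C_1(L)) whose image under the connecting homomorphism
    H_2(K,L) -> H_1(L), namely the class of bdry c in
    H_1(L) = Z_1(L)/B_1(L), is nonzero, i.e. bdry c is not in B_1(L). *)
Definition passes_dSG (K L : {set {set V}}) : bool :=
  [exists c : {set {set V}},
     [&& c \subset simplices K 2,
         bdry c \subset simplices L 1 &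
         bdry c \notin boundaries1 L]].

Definition death_set (K L : {set {set V}}) (int B : {set V}) : bool :=
  (B \subset int) && ~~ passes_dSG (restrict K B) L.

Definition minimal_death_set (K L : {set {set V}}) (int B : {set V}) : bool :=
  death_set K L int B &&
  [forall B' : {set V}, (B' \proper B) ==> ~~ death_set K L int B'].

End Complexes.

Local Close Scope set_scope.
Local Open Scope classical_set_scope.

Definition mutually_independent (d : measure_display) (T : measurableType d)
  (R : realType) (P : probability T R) (V : finType) (I : {set V})
  (X : V -> T -> R) : Prop :=
  forall (J : {set V}) (E : V -> set R),
    J \subset I -> (forall v, v \in J -> measurable (E v)) ->
    P (\bigcap_(v in [set v | v \in J]) (X v @^-1` E v)) =
    (\prod_(v in J) P (X v @^-1` E v))%E.

From Pilot Require Import Defs.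
From HB Require Import structures.
From mathcomp Require Import all_boot all_order all_algebra.
From mathcomp Require Import all_classical all_reals all_analysis.
Import Order.TTheory GRing.Theory Num.Theory numFieldNormedType.Exports.
Local Open Scope ring_scope.

(* Removing nodes only removes simplices, and a fundamental class of a smaller
   complex is still one of a larger complex; hence death sets are closed
   upwards inside chi_int.  So the failed set is a death set exactly when it
   contains a minimal death set A, i.e. when S_A <= t for some such A, which is
   the statement min_i S_{A_i} <= t.  No geometric or probabilistic hypothesis
   is needed: the two events coincide pointwise. *)

Section DeathSets.
Local Open Scope set_scope.
Variables (V : finType) (K L : {set {set V}}) (int : {set V}).

Lemma passes_dSG_subset (K1 K2 : {set {set V}}) :
  K1 \subset K2 -> passes_dSG K1 L -> passes_dSG K2 L.
Proof.
move=> sK12 /existsP[c /and3P[sc bc nbc]]; apply/existsP; exists c.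
rewrite bc nbc !andbT; apply: (fintype.subset_trans sc).
by apply/fintype.subsetP=> s; rewrite !inE => /andP[/(fintype.subsetP sK12) -> ->].
Qed.

Lemma restrict_subset (B B' : {set V}) :
  B \subset B' -> Defs.restrict K B' \subset Defs.restrict K B.
Proof.
move=> sBB'; apply/fintype.subsetP=> s; rewrite !inE => /andP[-> /=].
exact: disjointWr.
Qed.

Lemma death_set_superset (B B' : {set V}) :
  death_set K L int B -> B \subset B' -> B' \subset int ->
  death_set K L int B'.
Proof.
move=> /andP[_ notB] sBB' sB'I; rewrite /death_set sB'I /=.
apply: contra notB; apply: passes_dSG_subset; exact: restrict_subset.
Qed.

Lemma minset_minimal_death_set (A : {set V}) :
  minset (death_set K L int) A -> minimal_death_set K L int A.
Proof.
move=> /minsetP[deathA minA]; rewrite /minimal_death_set deathA /=.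
apply/forallP=> B; apply/implyP=> /andP[sBA nsAB]; apply: contraNN nsAB => deathB.
by rewrite (minA B deathB sBA).
Qed.

Lemma death_setP (B : {set V}) : B \subset int ->
  reflect (exists2 A, minimal_death_set K L int A & A \subset B)
          (death_set K L int B).
Proof.
move=> sBI; apply: (iffP idP) => [deathB | [A /andP[deathA _] sAB]].
  have [A minA sAB] := minset_exists deathB.
  by exists A => //; apply: minset_minimal_death_set.
exact: death_set_superset deathA sAB sBI.
Qed.

End DeathSets.
Arguments death_setP {V K L int B}.

Lemma bigmin_bigmax_le_fin (R : realType) (I : finType) (Q : pred {set I})
    (x : I -> R) (t : R) :
  ((\big[Order.min/+oo]_(A : {set I} | Q A) \big[Order.max/-oo]_(v in A) (x v)%:E)
     <= t%:E)%E <->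
  exists2 A : {set I}, Q A & forall v, v \in A -> x v <= t.
Proof.
split=> [|[A QA leAt]].
  move=> /bigmin_leP[|[A QA /bigmax_leP[_ leAt]]]; first by rewrite leye_eq.
  by exists A => // v vA; rewrite -lee_fin leAt.
apply/bigmin_leP; right; exists A => //.
by apply/bigmax_leP; split=> [|v vA]; rewrite ?leNye ?lee_fin ?leAt.
Qed.

Theorem mainTheorem2 (R : realType) (V : finType) (pos : V -> R * R)
  (Delta : set (R * R)) (m : nat) (f : 'I_m -> V) (rb : R)
  (d : measure_display) (T : measurableType d) (P : probability T R)
  (X : V -> T -> R) (t : R) :
  compact Delta -> connected Delta ->
  (3 <= m)%N -> injective f -> injective pos ->
  topo_boundary Delta =
    (\bigcup_(i in [set: 'I_m]) closed_segment (pos (f i)) (pos (f (ordS i))))%classic ->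
  (forall v : V, Delta (pos v)) ->
  0 < rb ->
  (forall i : 'I_m, euclid_dist (pos (f i)) (pos (f (ordS i))) < rb) ->
  let chi_int : {set V} := (~: [set f i | i : 'I_m])%SET in
  let K := rips pos rb in
  let F := fence_cx f in
  (forall v, v \in chi_int -> measurable_fun [set: T] (X v)) ->
  mutually_independent P chi_int X ->
  ~~ death_set K F chi_int finset.set0 ->
  P [set w | death_set K F chi_int [set v in chi_int | X v w <= t]%SET]%classic =
  P [set w | (\big[Order.min/+oo]_(A : {set V} | minimal_death_set K F chi_int A)
                 \big[Order.max/-oo]_(v in A) (X v w)%:E <= t%:E)%E]%classic.
Proof.
move=> _ _ _ _ _ _ _ _ _ chi_int K F _ _ _.
set failed := fun w => [set v in chi_int | X v w <= t]%SET.
have failed_int w : failed w \subset chi_int.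
  by apply/fintype.subsetP=> v; rewrite inE => /andP[].
congr (P _); apply/seteqP; split=> w /=.
- move=> /(death_setP (failed_int w))[A minA sAF].
  apply/bigmin_bigmax_le_fin; exists A => // v /(fintype.subsetP sAF).
  by rewrite inE => /andP[].
- move=> /bigmin_bigmax_le_fin[A minA leAt].
  have /andP[/andP[sAI _] _] := minA.
  apply/(death_setP (failed_int w)); exists A => //.
  by apply/fintype.subsetP=> v vA; rewrite inE (fintype.subsetP sAI) ?leAt.
Qed.
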